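(* Let $\Omega\subseteq\mathbb{R}^N$ be an open set and let $f:\Omega\times\mathbb{R}^d\times\mathbb{R}^k\to[0,+\infty)$ be a normal integrand. Then for every Young measure $\mu=(\mu_x)_{x\in\Omega}$ on $\mathbb{R}^k$ and every measurable function $v:\Omega\to\mathbb{R}^d$, $$\lim_{q\to\infty}\Big(\int_\Omega\int_{\mathbb{R}^k}f(x,v(x),\xi)^q\,d\mu_x(\xi)\,dx\Big)^{1/q}=\operatorname*{ess\,sup}_{x\in\Omega}\Big(\mu_x\text{-}\operatorname*{ess\,sup}_{\xi\in\mathbb{R}^k}f(x,v(x),\xi)\Big).$$
   Context: A function $f:\Omega\times\mathbb{R}^d\times\mathbb{R}^k\to\mathbb{R}$ is a normal integrand if it is $\mathcal{L}^N\otimes\mathcal{B}_d\otimes\mathcal{B}_k$-measurable and $f(x,\cdot,\cdot)$ is lower semicontinuous for a.e. $x\in\Omega$. A Young measure on $\Omega$ (with values in $\mathbb{R}^k$) is a map $x\mapsto\mu_x$ from $\Omega$ into the nonnegative Radon measures on $\mathbb{R}^k$ which is weak$^*$-measurable (i.e. $x\mapsto\int\varphi\,d\mu_x$ is measurable for every continuous compactly supported $\varphi$) and satisfies $\mu_x(\mathbb{R}^k)\le1$ for a.e. $x$, as generated (via the fundamental theorem on Young measures) by a sequence of measurable functions $V_n:\Omega\to\mathbb{R}^k$. $\mu_x\text{-}\operatorname{ess\,sup}$ denotes the essential supremum with respect to the measure $\mu_x$.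
   Formalization: The open set Ω also has finite Lebesgue measure, and each essential supremum is taken in [0,+∞], as inf{M ≥ 0 : g ≤ M a.e.}. Apart from conventions, each condition added here is assumed in the paper as well or is needed for the statement above to hold. *)

From HB Require Import structures.
From mathcomp Require Import all_boot all_order all_algebra.
From mathcomp Require Import all_classical all_reals all_analysis.
From mathcomp Require Import measurable_realfun.

Set Implicit Arguments.
Unset Strict Implicit.
Unset Printing Implicit Defensive.

Import Order.TTheory GRing.Theory Num.Theory.
Import numFieldNormedType.Exports.

Local Open Scope classical_set_scope.
Local Open Scope ring_scope.

Definition Borel (R : realType) (n : nat) :=
  g_sigma_algebraType (@open 'rV[R]_n).

Definition box (R : realType) (n : nat) (a b : 'rV[R]_n) : set 'rV[R]_n :=
  [set x | forall i : 'I_n, a ord0 i <= x ord0 i < b ord0 i].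

(** Elementary volume: 0 on the empty set, the usual volume on nonempty
    boxes, +oo on all other Borel sets (so that only box covers count in
    the outer measure below). *)
Definition box_vol (R : realType) (n : nat) (A : set (Borel R n)) : \bar R :=
  ereal_inf ([set v | A = set0 /\ v = 0%E] `|`
    [set v | exists a b : 'rV[R]_n, (forall i, a ord0 i < b ord0 i) /\
             A = box a b /\ v = (\prod_(i < n) (b ord0 i - a ord0 i))%:E]).

Lemma box_vol0 (R : realType) (n : nat) : box_vol (set0 : set (Borel R n)) = 0%E.
Proof.
apply/eqP; rewrite eq_le; apply/andP; split.
  by apply: ereal_inf_lbound; left.
apply: le_ereal_inf_tmp => v [[_ ->]//|[a [b [ab [+ ->]]]]].
move=> /(congr1 (fun A : set 'rV[R]_n => A a)) /=.
rewrite /box /= => /esym H; exfalso; rewrite -H => i.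
by rewrite lexx ab.
Qed.

Lemma box_vol_ge0 (R : realType) (n : nat) (A : set (Borel R n)) :
  (0 <= box_vol A)%E.
Proof.
apply: le_ereal_inf_tmp => v [[_ ->]//|[a [b [ab [_ ->]]]]].
rewrite lee_fin; apply: prodr_ge0 => i _.
by rewrite subr_ge0 ltW.
Qed.

Definition lebesgue_outer (R : realType) (n : nat) : set (Borel R n) -> \bar R :=
  mu_ext (@box_vol R n).
Arguments lebesgue_outer : clear implicits.

Section lebesgue_outer_instance.
Variables (R : realType) (n : nat).
HB.instance Definition _ :=
  isOuterMeasure.Build R (Borel R n) (lebesgue_outer R n)
    (@mu_ext0 _ _ _ _ (@box_vol0 R n) (@box_vol_ge0 R n))
    (mu_ext_ge0 (@box_vol_ge0 R n))
    (le_mu_ext (@box_vol R n))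
    (mu_ext_sigma_subadditive (@box_vol_ge0 R n)).
End lebesgue_outer_instance.

Definition Leb (R : realType) (n : nat) := caratheodory_type (lebesgue_outer R n).

Arguments Leb : clear implicits.

Definition lebesgueN (R : realType) (n : nat) : set (Leb R n) -> \bar R :=
  lebesgue_outer R n.
Arguments lebesgueN : clear implicits.

Section lebesgueN_instance.
Variables (R : realType) (n : nat).
HB.instance Definition _ := isMeasure.Build _ (Leb R n) R (lebesgueN R n)
  (@caratheodory_measure0 R (Borel R n) (lebesgue_outer R n))
  (@caratheodory_measure_ge0 R (Borel R n) (lebesgue_outer R n))
  (@caratheodory_measure_sigma_additive R (Borel R n) (lebesgue_outer R n)).
End lebesgueN_instance.

Local Open Scope ereal_scope.

Definition esssup (dT : measure_display) (T : measurableType dT) (R : realType)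
    (mu : {measure set T -> \bar R}) (D : set T) (g : T -> \bar R) : \bar R :=
  ereal_inf [set M : \bar R | 0 <= M /\ (\forall x \ae mu, D x -> g x <= M)].

Definition normal_integrand (R : realType) (N d k : nat) (Omega : set 'rV[R]_N)
    (f : 'rV[R]_N -> 'rV[R]_d -> 'rV[R]_k -> R) : Prop :=
  measurable_fun ((Omega : set (Leb R N)) `*` [set: Borel R d * Borel R k])
    (fun p : Leb R N * (Borel R d * Borel R k) => f p.1 p.2.1 p.2.2)
  /\ (\forall x \ae lebesgueN R N, Omega x ->
        lower_semicontinuous (fun p : 'rV[R]_d * 'rV[R]_k => (f x p.1 p.2)%:E)).

(** Young measure on Omega with values in R^k: a family of nonnegative Radon
    (= locally finite Borel) measures mu_x on R^k, weak-* measurable, with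
    mu_x(R^k) <= 1 for a.e. x. *)
Definition young_measure (R : realType) (N k : nat) (Omega : set 'rV[R]_N)
    (mu : 'rV[R]_N -> {measure set (Borel R k) -> \bar R}) : Prop :=
  [/\ (forall x, Omega x -> forall K : set 'rV[R]_k, compact K -> mu x K < +oo),
      (forall phi : 'rV[R]_k -> R, continuous phi ->
         compact (closure [set xi | phi xi != 0%R]) ->
         @measurable_fun _ _ (Leb R N) (\bar R) Omega
           (fun x => \int[mu x]_xi (phi xi)%:E))
    & (\forall x \ae lebesgueN R N, Omega x -> mu x [set: Borel R k] <= 1)].

From HB Require Import structures.
From mathcomp Require Import all_boot all_order all_algebra.
From mathcomp Require Import all_classical all_reals all_analysis.
From mathcomp Require Import measurable_realfun.
From mathcomp Require Import lra.

Set Implicit Arguments.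
Unset Strict Implicit.
Unset Printing Implicit Defensive.

Import Order.TTheory GRing.Theory Num.Theory.
Import numFieldNormedType.Exports.

Local Open Scope classical_set_scope.
Local Open Scope ring_scope.

(* Write F x xi = f x (v x) xi and M for the iterated essential supremum.  As
   mu_x has mass at most 1, the q-th moment I q = int_Omega int F^q dmu_x dx is
   at most M^q |Omega|; for 0 < m < M the set where F > m has positive finite
   measure c for dx mu_x(dxi), so I q >= m^q c.  Taking q-th roots, both bounds
   tend to M and to m.
   The measure-theoretic work is to make sense of the outer integral: testing
   weak-* measurability on continuous bumps increasing to the indicator of an
   open box makes x |-> mu_x B measurable for boxes B, and a Dynkin argument on
   cubes, where mu_x is finite, extends this to all Borel sets, so that mu is a
   kernel on Omega.  Omega itself is Lebesgue measurable because half-spaces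
   split boxes additively, hence are Caratheodory measurable. *)

Section boxes.
Variables (R : realType) (n : nat).
Implicit Types (a b : 'rV[R]_n) (U : set 'rV[R]_n).

Definition halfspace (i : 'I_n) (c : R) : set 'rV[R]_n := [set x | x ord0 i < c].

Definition obox a b : set 'rV[R]_n :=
  [set x | forall i, a ord0 i < x ord0 i < b ord0 i].

Lemma open_halfspace i c : open (halfspace i c).
Proof.
apply: (@open_comp _ _ (fun x : 'rV[R]_n => x ord0 i) [set y | y < c]).
  by move=> x _; exact: coord_continuous.
exact: open_lt.
Qed.

Lemma obox_halfspace a b : obox a b = \bigcap_(i in [set: 'I_n])
  (halfspace i (b ord0 i) `&` \bigcup_m ~` halfspace i (a ord0 i + m.+1%:R^-1)).
Proof.
apply/seteqP; split => x.
  move=> xab i _; have /andP[ax xb] := xab i; split => //.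
  have [m am] := ltr_add_invr ax; exists m => //.
  by rewrite /halfspace /= ltNge (ltW am).
move=> H i; have [xb [m _ /negP]] := H i Logic.I.
rewrite /halfspace /= -leNgt xb andbT; apply: lt_le_trans.
by rewrite ltrDl invr_gt0 ltr0n.
Qed.

Lemma obox_setI a b a' b' : obox a b `&` obox a' b' =
  obox (\row_i Num.max (a ord0 i) (a' ord0 i)) (\row_i Num.min (b ord0 i) (b' ord0 i)).
Proof.
apply/seteqP; split => x /=.
  move=> [xab xab'] i; rewrite !mxE gt_max lt_min.
  by have /andP[-> ->] := xab i; have /andP[-> ->] := xab' i.
move=> H; split => i; have := H i; rewrite !mxE gt_max lt_min;
  by move=> /andP[/andP[h1 h2] /andP[h3 h4]]; rewrite ?h1 ?h2 ?h3 ?h4.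
Qed.

Definition cbox a b : set 'rV[R]_n :=
  [set x | forall i, `[a ord0 i, b ord0 i]%classic (x ord0 i)].

Lemma compact_cbox a b : compact (cbox a b).
Proof.
apply: (@rV_compact _ _ (fun i => `[a ord0 i, b ord0 i]%classic)) => i.
exact: segment_compact.
Qed.

Lemma obox_sub_cbox a b : obox a b `<=` cbox a b.
Proof. by move=> x xab i; have /andP[ax xb] := xab i; rewrite /= in_itv /= !ltW. Qed.

Definition cube (m : nat) : set 'rV[R]_n :=
  obox (const_mx (- m%:R)) (const_mx m%:R).

Lemma bigcup_cube : \bigcup_m cube m = setT.
Proof.
apply/seteqP; split => // x _.
exists (\max_(i < n) (Num.truncn `|x ord0 i|).+1)%N => // i; rewrite !mxE -ltr_norml.
apply: lt_le_trans (truncnS_gt _) _; rewrite ler_nat.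
exact: (@leq_bigmax _ (fun i => (Num.truncn `|x ord0 i|).+1)).
Qed.

Lemma nondecreasing_cube : nondecreasing_seq cube.
Proof.
move=> p q pq; apply/subsetPset => x /= xp i; rewrite !mxE.
have := xp i; rewrite !mxE => /andP[px xp'].
have pqR : p%:R <= q%:R :> R by rewrite ler_nat.
by rewrite (le_lt_trans _ px) ?(lt_le_trans xp') // lerN2.
Qed.

Definition rat_obox (pq : 'rV[rat]_n * 'rV[rat]_n) : set 'rV[R]_n :=
  obox (map_mx ratr pq.1) (map_mx ratr pq.2).

Lemma open_bigcup_rat_obox U : open U ->
  U = \bigcup_(pq in [set pq | rat_obox pq `<=` U]) rat_obox pq.
Proof.
move=> oU; apply/seteqP; split; last by move=> x [pq sub]; exact: sub.
move=> x Ux; have /nbhs_ballP[e /= e0 exU] : nbhs x U by exact: open_nbhs_nbhs.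
have lo i : x ord0 i - e < x ord0 i by rewrite ltrBlDr ltrDl.
have hi i : x ord0 i < x ord0 i + e by rewrite ltrDl.
pose p := \row_i projT1 (cid (rat_in_itvoo (lo i))).
pose q := \row_i projT1 (cid (rat_in_itvoo (hi i))).
have Hp i : x ord0 i - e < map_mx ratr p ord0 i < x ord0 i.
  by rewrite !mxE; case: cid => r /=; rewrite in_itv.
have Hq i : x ord0 i < map_mx ratr q ord0 i < x ord0 i + e.
  by rewrite !mxE; case: cid => r /=; rewrite in_itv.
exists (p, q); last by move=> i; have /andP[_ ->] := Hp i; have /andP[->] := Hq i.
move=> y /= ypq; apply: exU; split => // i j; rewrite (ord1 i) /ball /=.
have /andP[h1 h2] := ypq j.
have /andP[h3 h4] := Hp j; have /andP[h5 h6] := Hq j.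
by rewrite ltr_norml; apply/andP; split; lra.
Qed.

Section sigma_algebra.
Variables (S : set_system 'rV[R]_n) (sS : sigma_algebra setT S).

(* S is the measurable family of its own generated measurable type, which gives
   access to the closure lemmas for measurable sets. *)
Let S_measurable : S = S.-sigma.-measurable.
Proof. by rewrite measurable_g_measurableTypeE. Qed.

Lemma sigma_algebra_open_of_obox : (forall a b, S (obox a b)) ->
  forall U, open U -> S U.
Proof.
move=> Sobox U /open_bigcup_rat_obox ->; rewrite S_measurable.
rewrite bigcup_mkcond; apply: countable_bigcupT_measurable => [|pq].
  exact: countableP.
by case: ifP => _; [rewrite -S_measurable; exact: Sobox|exact: measurable0].
Qed.

Lemma sigma_algebra_obox_of_halfspace : (forall i c, S (halfspace i c)) ->
  forall a b, S (obox a b).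
Proof.
move=> Shs a b; rewrite S_measurable obox_halfspace; apply: fin_bigcap_measurable.
  exact: finite_finset.
move=> i _; apply: measurableI; first by rewrite -S_measurable.
by apply: bigcupT_measurable => m; apply: measurableC; rewrite -S_measurable.
Qed.

End sigma_algebra.

End boxes.
Arguments compact_cbox {R n} a b.

Lemma interval_length_split (R : realType) (x y c : R) : x < y ->
  Num.max (Num.min y c - x) 0 + Num.max (y - Num.max x c) 0 = y - x.
Proof.
move=> xy; case: (leP c x) => cx.
  rewrite min_r ?(le_trans cx (ltW xy)) // max_r ?subr_le0 // add0r.
  by rewrite max_l // subr_ge0 ltW.
case: (leP c y) => cy.
  by rewrite !max_l ?subr_ge0 ?(ltW cx) //; lra.
by rewrite max_l ?subr_ge0 ?(ltW xy) // max_r ?addr0 // subr_le0 ltW.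
Qed.

Section lebesgue_open.
Variables (R : realType) (n : nat).
Implicit Types (a b : 'rV[R]_n).
Local Open Scope ereal_scope.

Lemma box_vol_box_le a b : box_vol (box a b : set (Borel R n)) <=
  (\prod_(i < n) Num.max (b ord0 i - a ord0 i) 0%R)%:E.
Proof.
have [ab|/existsNP[i /negP]] := pselect (forall i, (a ord0 i < b ord0 i)%R).
  apply: ereal_inf_lbound; right; exists a, b; do 2!split => //.
  by congr EFin; apply: eq_bigr => i _; rewrite max_l // subr_ge0 ltW.
rewrite -leNgt => ba; have -> : box a b = set0.
  apply/seteqP; split => // x /(_ i) /andP[ax xb].
  by have := lt_le_trans xb ba; rewrite ltNge ax.
by rewrite box_vol0 lee_fin; apply: prodr_ge0 => j _; rewrite le_max lexx orbT.
Qed.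

Lemma box_setI_halfspace a b i c : box a b `&` halfspace i c =
  box a (\row_j (if j == i then Num.min (b ord0 j) c else b ord0 j)).
Proof.
apply/seteqP; split => x /=.
  move=> [xab xc] j; rewrite mxE; case: eqVneq => [->|_]; last exact: xab.
  by rewrite lt_min xc andbT; exact: xab.
move=> xab; split => [j|]; last first.
  by have := xab i; rewrite mxE eqxx lt_min => /andP[_ /andP[]].
have := xab j; rewrite mxE; case: eqVneq => [->|//].
by rewrite lt_min => /andP[-> /andP[-> _]].
Qed.

Lemma box_setD_halfspace a b i c : box a b `\` halfspace i c =
  box (\row_j (if j == i then Num.max (a ord0 j) c else a ord0 j)) b.
Proof.
apply/seteqP; split => x /=.
  move=> [xab /negP]; rewrite -leNgt => cx j; rewrite mxE.
  by case: eqVneq => [->|_]; [rewrite ge_max cx andbT|]; exact: xab.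
move=> xab; split => [j|]; last first.
  have := xab i; rewrite mxE eqxx ge_max => /andP[/andP[_ ci] _].
  by apply/negP; rewrite -leNgt.
have := xab j; rewrite mxE; case: eqVneq => [->|//].
by rewrite ge_max => /andP[/andP[-> _] ->].
Qed.

Lemma box_vol_split (F : set (Borel R n)) i c :
  box_vol (F `&` halfspace i c) + box_vol (F `\` halfspace i c) <= box_vol F.
Proof.
apply: le_ereal_inf_tmp => _ [[-> ->]|[a [b [ab [-> ->]]]]].
  by rewrite set0I set0D box_vol0 adde0.
rewrite box_setI_halfspace box_setD_halfspace.
apply: le_trans (leeD (box_vol_box_le _ _) (box_vol_box_le _ _)) _.
set b' := \row_j _; set a' := \row_j _.
have off_i (u v : 'rV[R]_n) : {in predC1 i, u ord0 =1 a ord0} ->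
    {in predC1 i, v ord0 =1 b ord0} ->
    (\prod_(j < n | j != i) Num.max (v ord0 j - u ord0 j) 0 =
     \prod_(j < n | j != i) (b ord0 j - a ord0 j))%R.
  move=> ua vb; apply: eq_bigr => j ji.
  by rewrite ua ?vb // max_l // subr_ge0 ltW.
have a'E : {in predC1 i, a' ord0 =1 a ord0} by move=> j /negbTE ji; rewrite mxE ji.
have b'E : {in predC1 i, b' ord0 =1 b ord0} by move=> j /negbTE ji; rewrite mxE ji.
rewrite -EFinD lee_fin (bigD1 i) //= [in X in (_ + X)%R](bigD1 i) //=.
rewrite [leRHS](bigD1 i) //= !off_i // -mulrDl !mxE !eqxx.
by rewrite interval_length_split.
Qed.

Lemma halfspace_caratheodory i c :
  (lebesgue_outer R n).-caratheodory (halfspace i c).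
Proof.
apply: le_caratheodory_measurable => X.
apply: le_ereal_inf_tmp => _ [A [mA XA] <-].
have mH : measurable (halfspace i c : set (Borel R n)).
  by apply: sub_sigma_algebra; exact: open_halfspace.
apply: le_trans (leeD (ereal_inf_lbound _) (ereal_inf_lbound _)) _.
- exists (fun k => A k `&` halfspace i c) => //; split.
    by move=> k; exact: measurableI.
  by move=> x [/XA [k _ Akx] hx]; exists k.
- exists (fun k => A k `\` halfspace i c) => //; split.
    by move=> k; exact: measurableD.
  by move=> x [/XA [k _ Akx] hx]; exists k.
rewrite -nneseriesD => [|k _ _|k _ _]; try exact: box_vol_ge0.
by apply: lee_nneseries => k _; [rewrite adde_ge0 ?box_vol_ge0|exact: box_vol_split].
Qed.

Lemma Leb_measurable_open (U : set 'rV[R]_n) : open U -> measurable (U : set (Leb R n)).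
Proof.
apply: sigma_algebra_open_of_obox; first exact: sigma_algebra_measurable.
apply: sigma_algebra_obox_of_halfspace; first exact: sigma_algebra_measurable.
exact: halfspace_caratheodory.
Qed.

End lebesgue_open.

Section bump.
Variable R : realType.
Implicit Types (m : nat) (a b t : R).

Definition bump m a b t : R :=
  Num.min 1 (Num.max 0 (m%:R * Num.min (t - a) (b - t))).

Lemma bump_ge0 m a b t : 0 <= bump m a b t.
Proof. by rewrite /bump le_min ler01 le_max lexx. Qed.

Lemma bump_nondecreasing a b t : nondecreasing_seq (fun m => bump m a b t).
Proof.
move=> m m' mm'; apply: le_min2 => //; set d := Num.min _ _.
have [d0|d0] := leP d 0; first by rewrite !max_l ?mulr_ge0_le0.
by apply: le_max2 => //; rewrite ler_pM2r // ler_nat.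
Qed.

Lemma bump_out m a b t : ~~ (a < t < b) -> bump m a b t = 0.
Proof.
rewrite negb_and -!leNgt => tab.
have d0 : Num.min (t - a) (b - t) <= 0 by rewrite ge_min !subr_le0.
by rewrite /bump max_l ?mulr_ge0_le0 // min_r ?ler01.
Qed.

Lemma bump_in a b t : a < t < b -> \forall m \near \oo, bump m a b t = 1.
Proof.
case/andP => at_ tb; set d := Num.min (t - a) (b - t).
have d0 : 0 < d by rewrite lt_min !subr_gt0 at_ tb.
have [K] := ltr_add_invr d0; rewrite add0r -[_^-1]mulr1 ltr_pdivrMl // => Kd.
exists K.+1 => // m /= Km; rewrite /bump min_l // le_max; apply/orP; right.
by rewrite (le_trans (ltW Kd)) // ler_pM2r // ler_nat.
Qed.

Lemma continuous_bump m a b : continuous (bump m a b).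
Proof.
move=> t; rewrite /bump.
apply: (@continuous_min _ _ (cst 1)
  (fun t => Num.max 0 (m%:R * Num.min (t - a) (b - t)))).
  exact: cst_continuous.
apply: (@continuous_max _ _ (cst 0) (fun t => m%:R * Num.min (t - a) (b - t))).
  exact: cst_continuous.
apply: (@continuousM _ _ (cst m%:R) (fun t => Num.min (t - a) (b - t))).
  exact: cst_continuous.
apply: (@continuous_min _ _ (fun t => t - a) (fun t => b - t)).
  by apply: continuousB; [exact: cvg_id|exact: cst_continuous].
by apply: continuousB; [exact: cst_continuous|exact: cvg_id].
Qed.

End bump.

Section box_bump.
Variables (R : realType) (k : nat).
Implicit Types (m : nat) (a b x : 'rV[R]_k).

Definition box_bump m a b x : R :=
  \prod_(i < k) bump m (a ord0 i) (b ord0 i) (x ord0 i).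

Lemma box_bump_ge0 m a b x : 0 <= box_bump m a b x.
Proof. by apply: prodr_ge0 => i _; exact: bump_ge0. Qed.

Lemma box_bump_nondecreasing a b x : nondecreasing_seq (fun m => box_bump m a b x).
Proof.
by move=> m m' mm'; apply: ler_prod => i _; rewrite bump_ge0 bump_nondecreasing.
Qed.

Lemma box_bump_out m a b x : ~ obox a b x -> box_bump m a b x = 0.
Proof.
move=> /existsNP[i /negP xi].
by rewrite /box_bump (bigD1 i) //= bump_out ?mul0r.
Qed.

Lemma box_bump_cvg a b x : (box_bump m a b x)%:E @[m --> \oo] --> (\1_(obox a b) x)%:E.
Proof.
rewrite indicE; have [xab|xab] := pselect (obox a b x).
  rewrite mem_set //; apply: cvg_near_cst.
  have : \forall m \near \oo, forall i, bump m (a ord0 i) (b ord0 i) (x ord0 i) = 1.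
    by apply: filter_forall => i; exact: bump_in.
  by apply: filterS => m bm; rewrite /box_bump big1.
rewrite memNset //; apply: cvg_near_cst; apply: nearW => m.
by rewrite box_bump_out.
Qed.

Lemma continuous_box_bump m a b : continuous (box_bump m a b).
Proof.
have -> : box_bump m a b =
    \prod_(i < k) (fun x => bump m (a ord0 i) (b ord0 i) (x ord0 i)).
  by rewrite fct_prodE.
apply: (big_ind (fun f : 'rV[R]_k -> R => continuous f)) => [|f g cf cg|i _].
- exact: cst_continuous.
- by move=> x; apply: continuousM; [exact: cf|exact: cg].
- move=> x; apply: continuous_comp; first exact: coord_continuous.
  exact: continuous_bump.
Qed.

Lemma compact_support_box_bump m a b :
  compact (closure [set x | box_bump m a b x != 0]).
Proof.
apply: (subclosed_compact _ (compact_cbox a b)); first exact: closed_closure.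
rewrite [X in _ `<=` X](closure_id _).1; last exact: compact_closed (compact_cbox a b).
apply: closureS => x /= bx; apply: obox_sub_cbox.
by apply: contrapT => /box_bump_out xab; rewrite xab eqxx in bx.
Qed.

End box_bump.

Section borel.
Variables (R : realType) (n : nat).
Implicit Types (a b : 'rV[R]_n) (U : set 'rV[R]_n).
Local Open Scope ereal_scope.

Lemma Borel_measurable_open U : open U -> measurable (U : set (Borel R n)).
Proof. exact: sub_sigma_algebra. Qed.

Lemma Borel_measurable_closed U : closed U -> measurable (U : set (Borel R n)).
Proof.
move=> cU; rewrite -[U]setCK; apply: measurableC.
by apply: Borel_measurable_open; exact: closed_openC.
Qed.

Lemma Borel_measurable_obox a b : measurable (obox a b : set (Borel R n)).
Proof.
apply: (sigma_algebra_obox_of_halfspace (@sigma_algebra_measurable _ (Borel R n))).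
by move=> i c; apply: Borel_measurable_open; exact: open_halfspace.
Qed.

Definition oboxes : set_system 'rV[R]_n := [set A | exists a b, A = obox a b].

Lemma Borel_sub_oboxes : @measurable _ (Borel R n) `<=` <<s oboxes >>.
Proof.
apply: smallest_sub; first exact: smallest_sigma_algebra.
apply: sigma_algebra_open_of_obox; first exact: smallest_sigma_algebra.
by move=> a b; apply: sub_sigma_algebra; exists a, b.
Qed.

Lemma Borel_measurable_cube m : measurable (@cube R n m : set (Borel R n)).
Proof. exact: Borel_measurable_obox. Qed.

Lemma cvg_measure_setI_cube (nu : {measure set Borel R n -> \bar R})
    (U : set (Borel R n)) :
  measurable U -> nu (U `&` cube m) @[m --> \oo] --> nu U.
Proof.
move=> mU; rewrite -[X in _ --> nu X]setIT -(@bigcup_cube R n) setI_bigcupr.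
have mUc m : measurable (U `&` cube m).
  by apply: measurableI => //; exact: Borel_measurable_cube.
apply: nondecreasing_cvg_mu => //; first exact: bigcupT_measurable.
move=> p q pq; apply/subsetPset; apply: setIS; apply/subsetPset.
exact: nondecreasing_cube.
Qed.

Lemma measure_obox_lt (nu : {measure set Borel R n -> \bar R}) :
  (forall K : set 'rV[R]_n, compact K -> nu K < +oo) ->
  forall a b, nu (obox a b) < +oo.
Proof.
move=> nuK a b; apply: le_lt_trans (nuK _ (compact_cbox a b)).
apply: le_measure; rewrite ?inE; last exact: obox_sub_cbox.
- exact: Borel_measurable_obox.
- by apply: Borel_measurable_closed; apply: compact_closed => //; exact: compact_cbox.
Qed.

Lemma Borel_measurable_continuous (f : 'rV[R]_n -> R) :
  continuous f -> measurable_fun setT (f : Borel R n -> R).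
Proof.
move=> cf; apply: (measurability _ (RGenOpens.measurableE R)).
move=> _ [_ [c [e ->] <-]]; rewrite setTI; apply: sub_sigma_algebra.
by move/continuousP : cf; apply; exact: interval_open.
Qed.

Lemma integral_box_bump_cvg (nu : {measure set Borel R n -> \bar R}) a b :
  \int[nu]_x (box_bump m a b x)%:E @[m --> \oo] --> nu (obox a b).
Proof.
have lim_bump : (fun x => limn (fun m => (box_bump m a b x)%:E)) =
    fun x => (\1_(obox a b) x)%:E.
  by apply/funext => x; apply/cvg_lim => //; exact: box_bump_cvg.
have <- : \int[nu]_x (\1_(obox a b) x)%:E = nu (obox a b).
  by rewrite integral_indic ?setIT //; exact: Borel_measurable_obox.
rewrite -lim_bump.
apply: cvg_monotone_convergence => // [m|m x _|x _ p q pq].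
- apply/measurable_EFinP.
  exact: (Borel_measurable_continuous (@continuous_box_bump R n m a b)).
- exact: box_bump_ge0.
- exact: box_bump_nondecreasing.
Qed.

End borel.
Arguments oboxes {R n}.

Section young_kernel.
Variables (R : realType) (N k : nat) (O : set (Leb R N)).
Variable mu : 'rV[R]_N -> {measure set Borel R k -> \bar R}.
Hypotheses (mO : measurable O)
  (mu_weak : forall phi : 'rV[R]_k -> R, continuous phi ->
     compact (closure [set xi | phi xi != 0]) ->
     measurable_fun O (fun x => (\int[mu x]_xi (phi xi)%:E)%E))
  (mu_compact : forall x, O x -> forall K : set 'rV[R]_k, compact K -> (mu x K < +oo)%E).
Local Open Scope ereal_scope.

Definition young_kernel (x : Leb R N) : {measure set Borel R k -> \bar R} :=
  if x \in O then mu x else mzero.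

Lemma young_kernelE x U : young_kernel x U = ((fun x => mu x U) \_ O) x.
Proof. by rewrite /young_kernel /patch; case: ifP. Qed.

Lemma measurable_young_kernel_obox a b :
  measurable_fun setT (fun x => young_kernel x (obox a b)).
Proof.
under eq_fun do rewrite young_kernelE.
apply/(measurable_restrictT _ mO).
apply: (@emeasurable_fun_cvg _ _ _ O (fun m x => \int[mu x]_xi (box_bump m a b xi)%:E)).
  move=> m; apply: mu_weak; first exact: continuous_box_bump.
  exact: compact_support_box_bump.
by move=> x _; exact: integral_box_bump_cvg.
Qed.

Lemma young_kernel_obox_lt x a b : young_kernel x (obox a b) < +oo.
Proof.
rewrite young_kernelE /patch; case: ifPn => [/set_mem Ox|_]; last exact: ltey.
exact: (@measure_obox_lt _ _ (mu x) (mu_compact Ox)).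
Qed.

Lemma measurable_young_kernel_setI_cube m (U : set (Borel R k)) : measurable U ->
  measurable_fun setT (fun x => young_kernel x (U `&` cube m)).
Proof.
(* On a cube young_kernel x is finite, as the difference step below needs. *)
have mC : measurable (@cube R k m : set (Borel R k)) by exact: Borel_measurable_cube.
pose good := [set U : set (Borel R k) | measurable U /\
  measurable_fun setT (fun x => young_kernel x (U `&` cube m))].
have oboxes_good : oboxes `<=` good.
  move=> _ [a [b ->]]; split; first exact: Borel_measurable_obox.
  by rewrite obox_setI; exact: measurable_young_kernel_obox.
have good_setD A B : B `<=` A -> good A -> good B -> good (A `\` B).
  move=> BA [mA mkA] [mB mkB]; split; first exact: measurableD.
  suff -> : (fun x => young_kernel x ((A `\` B) `&` cube m)) =
      (fun x => young_kernel x (A `&` cube m) - young_kernel x (B `&` cube m)).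
    exact: emeasurable_funB.
  apply/funext => x; have mAC : measurable (A `&` cube m) by exact: measurableI.
  have finAC : young_kernel x (A `&` cube m) < +oo.
    apply: le_lt_trans (young_kernel_obox_lt x _ _); apply: le_measure => //.
    - by rewrite inE.
    - by rewrite inE; exact: Borel_measurable_obox.
    - exact: subIsetr.
  by rewrite setIDAC setIDA measureD // setIAC (setIidr BA).
have good_ndseq : ndseq_closed good.
  move=> F ndF goodF; split; first by apply: bigcupT_measurable => i; case: (goodF i).
  apply: (@emeasurable_fun_cvg _ _ _ setT (fun i x => young_kernel x (F i `&` cube m))).
    by move=> i; case: (goodF i).
  move=> x _; rewrite setI_bigcupl; apply: nondecreasing_cvg_mu.
  - by move=> i; apply: measurableI => //; case: (goodF i).
  - by apply: bigcupT_measurable => i; apply: measurableI => //; case: (goodF i).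
  - by move=> i j ij; apply/subsetPset; apply: setSI; apply/subsetPset; exact: ndF.
have good_lambda : lambda_system setT good.
  split => //; split; first exact: measurableT.
  by rewrite setTI; exact: measurable_young_kernel_obox.
have oboxesI : setI_closed (@oboxes R k).
  by move=> _ _ [a [b ->]] [a' [b' ->]]; rewrite obox_setI; do 2!eexists.
move=> mU; suff [] : good U by [].
apply: (lambda_system_subset oboxesI good_lambda oboxes_good) => //.
exact: Borel_sub_oboxes.
Qed.

Lemma measurable_young_kernel (U : set (Borel R k)) : measurable U ->
  measurable_fun setT (young_kernel ^~ U).
Proof.
move=> mU; apply: (@emeasurable_fun_cvg _ _ _ setT
  (fun m x => young_kernel x (U `&` cube m))).
  by move=> m; exact: measurable_young_kernel_setI_cube.
by move=> x _; exact: cvg_measure_setI_cube.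
Qed.

HB.instance Definition _ := isKernel.Build _ _ (Leb R N) (Borel R k) R
  young_kernel measurable_young_kernel.

Lemma measurable_young_kernel_xsection (A : set (Leb R N * Borel R k)) :
  measurable A -> measurable_fun setT (fun x => young_kernel x (xsection A x)).
Proof.
move=> mA; apply: (@emeasurable_fun_cvg _ _ _ setT
  (fun m x => young_kernel x (xsection A x `&` cube m))); last first.
  by move=> x _; apply: cvg_measure_setI_cube; exact: measurable_xsection.
move=> m; have mC := @Borel_measurable_cube R k m.
suff ub x : exists M : R, forall X, measurable X -> mrestr (young_kernel x) mC X < M%:E.
  by have [] := @measurable_prod_subset_xsection_kernel _ _ _ _ _ young_kernel _ mC
    ub _ mA.
exists (fine (young_kernel x (cube m)) + 1)%R => X mX.
have fin_cube : young_kernel x (cube m) \is a fin_num.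
  by rewrite ge0_fin_numE //; exact: young_kernel_obox_lt.
apply: (@le_lt_trans _ _ (young_kernel x (cube m))).
  apply: le_measure; last exact: subIsetr.
  - by rewrite inE; exact: measurableI.
  - by rewrite inE.
by rewrite -{1}(fineK fin_cube) lte_fin ltrDl.
Qed.

Import HBNNSimple.

Lemma measurable_young_kernel_integral (g : Leb R N * Borel R k -> \bar R) :
  (forall z, 0 <= g z) -> measurable_fun setT g ->
  measurable_fun setT (fun x => \int[young_kernel x]_y g (x, y)).
Proof.
move=> g0 mg.
apply: (@measurable_fun_xsection_integral _ _ _ _ _ g young_kernel
  (nnsfun_approx measurableT mg)).
- by move=> a b ab; exact/nd_nnsfun_approx.
- by move=> z; exact/cvg_nnsfun_approx.
- by move=> n r; apply: measurable_young_kernel_xsection.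
Qed.

Lemma measurable_young_integral (g : Leb R N * Borel R k -> \bar R) :
  (forall z, 0 <= g z) -> measurable_fun setT g ->
  measurable_fun O (fun x => \int[mu x]_y g (x, y)).
Proof.
move=> g0 mg; apply: eq_measurable_fun (measurable_funS measurableT (@subsetT _ O)
  (measurable_young_kernel_integral g0 mg)) => x /set_mem Ox.
by rewrite /young_kernel (mem_set Ox).
Qed.

End young_kernel.

Section esssup.
Local Open Scope ereal_scope.
Context d (T : measurableType d) (R : realType).
Variables (mu : {measure set T -> \bar R}) (D : set T) (g : T -> \bar R).

Lemma esssup_ge0 : 0 <= esssup mu D g.
Proof. by apply: le_ereal_inf_tmp => M []. Qed.

Lemma esssup_le M : 0 <= M ->
  (\forall x \ae mu, D x -> g x <= M) -> esssup mu D g <= M.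
Proof. by move=> M0 gM; apply: ereal_inf_lbound. Qed.

Lemma ae_le_esssup : \forall x \ae mu, D x -> g x <= esssup mu D g.
Proof.
have [->|Sy] := eqVneq (esssup mu D g) +oo; first by apply: nearW => x _; exact: leey.
have Sfin : esssup mu D g \is a fin_num.
  by rewrite ge0_fin_numE ?esssup_ge0 // lt_neqAle Sy leey.
have /choice[M HM] n : exists M, (0 <= M /\ \forall x \ae mu, D x -> g x <= M) /\
    M < esssup mu D g + (n.+1%:R^-1)%:E.
  have [M HM1 HM2] := @lb_ereal_inf_adherent R _ (n.+1%:R^-1)%R
    ltac:(by rewrite invr_gt0 ltr0n) Sfin.
  by exists M.
have : \forall x \ae mu, forall n, D x -> g x <= M n.
  by apply: ae_foralln => n; exact: (HM n).1.2.
apply: filterS => x gxM Dx; apply/lee_addgt0Pr => e e0.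
have [n] := ltr_add_invr e0; rewrite add0r => ne.
apply: le_trans (gxM n Dx) _; apply: le_trans (ltW (HM n).2) _.
by rewrite leeD2l // lee_fin ltW.
Qed.

End esssup.

Section limits.
Variable R : realType.

Lemma cvgy_inv0 : q^-1 @[q --> +oo] --> (0 : R).
Proof.
apply/cvgrPdist_lt => e e0; near=> q.
have q0 : 0 < q by near: q; apply: nbhs_pinfty_gt; exact: num_real.
have qe : e^-1 < q by near: q; apply: nbhs_pinfty_gt; exact: num_real.
rewrite sub0r normrN ger0_norm ?invr_ge0 ?(ltW q0) //.
by rewrite -[e]invrK ltf_pV2 // ?posrE ?invr_gt0.
Unshelve. all: end_near. Qed.

Lemma cvg_powR_inv (c : R) : 0 < c -> c `^ q^-1 @[q --> +oo] --> (1 : R).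
Proof.
move=> c0; have -> : (fun q => c `^ q^-1) = (fun q => expR (q^-1 * ln c)).
  by apply/funext => q; rewrite /powR gt_eqF.
rewrite -expR0; apply: continuous_cvg; first exact: continuous_expR.
by rewrite -(mul0r (ln c)); apply: cvgM; [exact: cvgy_inv0|exact: cvg_cst].
Qed.

Lemma powR_mul_inv (x c q : R) : 0 <= x -> 0 <= c -> 0 < q ->
  (x `^ q * c) `^ q^-1 = x * c `^ q^-1.
Proof.
move=> x0 c0 q0; rewrite powRM ?powR_ge0 // -powRrM mulfV ?gt_eqF //.
by rewrite powRr1.
Qed.

Lemma cvge_between T (F : set_system T) {FF : Filter F} (u : T -> \bar R) (l : \bar R) :
  (forall a : R, (a%:E < l)%E -> \forall t \near F, (a%:E < u t)%E) ->
  (forall b : R, (l < b%:E)%E -> \forall t \near F, (u t < b%:E)%E) ->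
  u @ F --> l.
Proof.
case: l => [l| |] lower upper.
- have ufin : \forall t \near F, u t \is a fin_num.
    have /lower lt1 : ((l - 1)%:E < l%:E)%E by rewrite lte_fin gtrBl.
    have /upper gt1 : (l%:E < (l + 1)%:E)%E by rewrite lte_fin ltrDl.
    apply: filterS2 lt1 gt1 => t lt1 gt1; rewrite fin_numE -ltey -ltNye.
    by rewrite (lt_trans _ lt1) ?ltNyr // (lt_trans gt1) ?ltry.
  apply/fine_cvgP; split => //; apply/cvgrPdist_lt => e e0; near=> t.
  have lo : ((l - e)%:E < u t)%E by near: t; apply: lower; rewrite lte_fin gtrBl.
  have hi : (u t < (l + e)%:E)%E by near: t; apply: upper; rewrite lte_fin ltrDl.
  have ut : (fine (u t))%:E = u t by rewrite fineK //; near: t.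
  rewrite -ut lte_fin in lo; rewrite -ut lte_fin in hi.
  by rewrite ltr_distlC lo hi.
- by apply/cvgeyPgt => A; apply: lower; exact: ltry.
- by apply/cvgeNyPlt => A; apply: upper; exact: ltNyr.
Unshelve. all: end_near. Qed.

Lemma poweR_inv_cvg (u : R -> \bar R) (l : \bar R) :
  (0 <= l)%E -> (forall q, 0 <= u q)%E ->
  (forall m, l = m%:E ->
    exists2 C, 0 < C & forall q, 0 < q -> (u q <= (m `^ q * C)%:E)%E) ->
  (forall m, 0 < m -> (m%:E < l)%E ->
    exists2 c, 0 < c & forall q, 0 < q -> ((m `^ q * c)%:E <= u q)%E) ->
  (u q `^ q^-1)%E @[q --> +oo] --> l.
Proof.
move=> l0 u0 upper lower.
have le_poweR (x y : \bar R) q : 0 < q -> (0 <= x)%E -> (x <= y)%E ->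
    (x `^ q^-1 <= y `^ q^-1)%E.
  move=> q0 x0 xy; apply: gt0_ler_poweR => //.
  - by rewrite invr_ge0 ltW.
  - by rewrite in_itv /= x0 leey.
  - by rewrite in_itv /= (le_trans x0 xy) leey.
have root_cvg (m c : R) : 0 < c -> m * c `^ q^-1 @[q --> +oo] --> m.
  move=> c0; rewrite -[X in _ --> X]mulr1.
  by apply: cvgM; [exact: cvg_cst|exact: cvg_powR_inv].
have q_gt0 : \forall q \near +oo, (0 : R) < q by apply: nbhs_pinfty_gt; exact: num_real.
apply: cvge_between => [a al|b lb].
- have [a0|a0] := ltP a 0.
    by apply: nearW => q; apply: lt_le_trans (poweR_ge0 _ _); rewrite lte_fin.
  have [m [am m0 ml]] : exists m, [/\ a < m, 0 < m & (m%:E < l)%E].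
    case: l al {l0 upper lower} => [l| |] //; rewrite ?lte_fin => al.
    - have [am ml] := midf_lt al.
      by exists ((a + l) / 2); rewrite am lte_fin ml (le_lt_trans a0 am).
    - by exists (a + 1); rewrite ltry ltrDl ltr01 (le_lt_trans a0) ?ltrDl.
  have [c c0 mc] := lower m m0 ml.
  apply: filterS2 q_gt0 (cvgr_gt _ (root_cvg m c c0) _ am) => q q0 amc.
  apply: (lt_le_trans _ (le_poweR _ _ q q0 _ (mc q q0))).
    by rewrite poweR_EFin powR_mul_inv ?powR_ge0 ?ltW // lte_fin.
  by rewrite lee_fin mulr_ge0 ?powR_ge0 ?ltW.
- case: l lb l0 {lower} upper => [l| |] // lb l0 /(_ l erefl) [C C0 uC].
  rewrite lte_fin in lb; rewrite lee_fin in l0.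
  apply: filterS2 q_gt0 (cvgr_lt _ (root_cvg l C C0) _ lb) => q q0 lCb.
  apply: (le_lt_trans (le_poweR _ _ q q0 (u0 q) (uC q q0))).
  by rewrite poweR_EFin powR_mul_inv ?(ltW C0) // lte_fin.
Qed.

End limits.

Lemma measurable_fun_plug {dX dZ dY dW} {X : measurableType dX}
    {Z : measurableType dZ} {Y : measurableType dY} {W : measurableType dW}
    (D : set X) (h : X * (Z * Y) -> W) (v : X -> Z) :
  measurable D -> measurable_fun (D `*` setT) h -> measurable_fun D v ->
  measurable_fun (D `*` setT) (fun z => h (z.1, (v z.1, z.2))).
Proof.
move=> mD mh mv; pose g z := (z.1, ((v \_ D) z.1, z.2)) : X * (Z * Y).
apply: (eq_measurable_fun (h \o g)).
  by move=> [x y] /set_mem [/= Dx _]; rewrite /g /= patchE mem_set.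
apply: (measurable_comp (F := D `*` setT)) => //.
- exact: measurableX.
- by move=> _ [[x y] [/= Dx _] <-].
apply: (measurable_funS measurableT) => //.
have mv' : measurable_fun setT (v \_ D) by apply/(measurable_restrictT _ mD).
apply: measurable_fun_pair; first exact: measurable_fst.
apply: measurable_fun_pair; last exact: measurable_snd.
exact: measurableT_comp mv' measurable_fst.
Qed.

Section powR_integral.
Local Open Scope ereal_scope.
Context d (T : measurableType d) (R : realType).
Variables (nu : {measure set T -> \bar R}) (f : T -> R).
Hypotheses (mf : measurable_fun setT f) (f_ge0 : forall y, (0 <= f y)%R).

Lemma integral_powR_le_esssup (m q : R) : nu setT <= 1 -> (0 <= q)%R ->
  esssup nu setT (fun y => (f y)%:E) <= m%:E -> \int[nu]_y (f y `^ q)%:E <= (m `^ q)%:E.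
Proof.
move=> nu1 q0 fm.
have m0 : (0 <= m)%R by rewrite -lee_fin (le_trans _ fm) // esssup_ge0.
apply: (@le_trans _ _ (\int[nu]_y (m `^ q)%:E)).
  apply: ae_ge0_le_integral => //.
  - by move=> y _; rewrite lee_fin powR_ge0.
  - by apply/measurable_EFinP; exact: measurableT_comp (measurable_powR q) mf.
  - by move=> y _; rewrite lee_fin powR_ge0.
  - apply: filterS (ae_le_esssup nu setT (fun y => (f y)%:E)) => y fy _.
    by rewrite lee_fin ge0_ler_powR ?nnegrE // -lee_fin (le_trans (fy _)).
by rewrite integral_cst // -[leRHS]mule1 lee_pmul // lee_fin powR_ge0.
Qed.

Lemma integral_powR_ge_superlevel (m q : R) : (0 <= m)%R -> (0 <= q)%R ->
  (m `^ q)%:E * nu (f @^-1` `]m, +oo[) <= \int[nu]_y (f y `^ q)%:E.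
Proof.
move=> m0 q0.
set S := f @^-1` `]m, +oo[.
have mS : measurable S by rewrite -[S]setTI; exact: mf.
have <- : \int[nu]_y (\1_S y)%:E = nu S by rewrite integral_indic // setIT.
rewrite -ge0_integralZl //; last 2 first.
- exact/measurable_EFinP/measurable_indic.
- by rewrite lee_fin powR_ge0.
apply: ge0_le_integral => //.
- by move=> y _; rewrite mule_ge0 ?lee_fin ?powR_ge0.
- exact/measurable_funeM/measurable_EFinP/measurable_indic.
- by apply/measurable_EFinP; exact: measurableT_comp (measurable_powR q) mf.
move=> y _; rewrite indicE; case: (boolP (y \in _)) => [/set_mem /= fy|_].
  rewrite mule1 lee_fin ge0_ler_powR ?nnegrE //.
  by move: fy; rewrite /S /= in_itv /= andbT => /ltW.
by rewrite mule0 lee_fin powR_ge0.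
Qed.

Lemma esssup_le_superlevel0 (m : R) : (0 <= m)%R ->
  nu (f @^-1` `]m, +oo[) = 0 -> esssup nu setT (fun y => (f y)%:E) <= m%:E.
Proof.
move=> m0 null; apply: esssup_le; first by rewrite lee_fin.
exists (f @^-1` `]m, +oo[); split => //; first by rewrite -[_ @^-1` _]setTI; exact: mf.
move=> y /= fy; rewrite in_itv /= andbT ltNge; apply/negP => fm; apply: fy => _.
by rewrite lee_fin.
Qed.

End powR_integral.

Section iterated_esssup.
Local Open Scope ereal_scope.
Context dX dY (X : measurableType dX) (Y : measurableType dY) (R : realType).
Variables (L : {measure set X -> \bar R}) (D : set X).
Variables (K : X -> {measure set Y -> \bar R}) (F : X -> Y -> R).
Hypotheses (mD : measurable D) (LD_lt : L D < +oo)
  (F_ge0 : forall x y, D x -> (0 <= F x y)%R)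
  (mF : measurable_fun (D `*` setT) (fun z => F z.1 z.2))
  (mK : forall g : X * Y -> \bar R, (forall z, 0 <= g z) -> measurable_fun setT g ->
     measurable_fun D (fun x => \int[K x]_y g (x, y)))
  (K_le1 : \forall x \ae L, D x -> K x setT <= 1).

Let M := esssup L D (fun x => esssup (K x) setT (fun y => (F x y)%:E)).
Let Lq (q : R) := \int[L]_(x in D) \int[K x]_y (F x y `^ q)%:E.
Let superlevel x m := F x @^-1` `]m, +oo[.

Let mDY : measurable (D `*` [set: Y]). Proof. exact: measurableX. Qed.

Lemma measurable_kernel_integral (g : X * Y -> \bar R) :
  (forall z, (D `*` setT) z -> 0 <= g z) -> measurable_fun (D `*` setT) g ->
  measurable_fun D (fun x => \int[K x]_y g (x, y)).
Proof.
move=> g0 mg; have g0' z : 0 <= (g \_ (D `*` setT)) z.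
  by rewrite patchE; case: ifPn => // /set_mem; exact: g0.
apply: eq_measurable_fun (mK g0' ((measurable_restrictT _ mDY).1 mg)) => x /set_mem Dx.
by apply: eq_integral => y _; rewrite patchE mem_set.
Qed.

Lemma measurable_section x : D x -> measurable_fun setT (F x).
Proof.
move=> Dx; have := (measurable_restrictT _ mDY).1 mF.
move=> /(measurable_fun_pair2 x); apply: eq_measurable_fun => y _.
by rewrite patchE mem_set.
Qed.

Lemma measurable_superlevel_section x m : D x -> measurable (superlevel x m).
Proof. by move=> Dx; rewrite -[superlevel x m]setTI; exact: measurable_section. Qed.

Lemma measurable_Lq_integrand q : measurable_fun D (fun x => \int[K x]_y (F x y `^ q)%:E).
Proof.
apply: (measurable_kernel_integral (g := fun z => (F z.1 z.2 `^ q)%:E)) => [z _|].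
  by rewrite lee_fin powR_ge0.
by apply/measurable_EFinP; exact: measurableT_comp (measurable_powR q) mF.
Qed.

Lemma measurable_superlevel m : measurable_fun D (fun x => K x (superlevel x m)).
Proof.
pose g z := ((\1_(`]m, +oo[ : set R) (F z.1 z.2) : R)%:E).
have mg : measurable_fun D (fun x => \int[K x]_y g (x, y)).
  apply: measurable_kernel_integral => [z _|]; first by rewrite lee_fin.
  by apply/measurable_EFinP; apply: measurableT_comp mF; exact: measurable_indic.
apply: eq_measurable_fun mg => x /set_mem Dx.
rewrite -[superlevel x m]setIT -integral_indic //.
exact: measurable_superlevel_section.
Qed.

Lemma Lq_ge0 q : 0 <= Lq q.
Proof.
by apply: integral_ge0 => x _; apply: integral_ge0 => y _; rewrite lee_fin powR_ge0.
Qed.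

(* The [+ 1] keeps the constant positive when [L D = 0]. *)
Lemma Lq_le (m q : R) : M = m%:E -> (0 < q)%R ->
  Lq q <= (m `^ q * (fine (L D) + 1))%:E.
Proof.
move=> Mm q0; have LDfin : L D \is a fin_num by rewrite ge0_fin_numE.
apply: (@le_trans _ _ (\int[L]_(x in D) (m `^ q)%:E)).
  apply: ae_ge0_le_integral => //.
  - by move=> x _; apply: integral_ge0 => y _; rewrite lee_fin powR_ge0.
  - exact: measurable_Lq_integrand.
  - by move=> x _; rewrite lee_fin powR_ge0.
  have := ae_le_esssup L D (fun x => esssup (K x) setT (fun y => (F x y)%:E)).
  apply: filterS2 K_le1 => x K1 xM Dx.
  apply: (integral_powR_le_esssup (measurable_section Dx) (fun y => @F_ge0 x y Dx)).
  - exact: K1.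
  - exact: ltW.
  - by rewrite -Mm; exact: xM.
rewrite integral_cst // -(fineK LDfin) -EFinM lee_fin ler_wpM2l ?powR_ge0 //.
by rewrite lerDl.
Qed.

Lemma superlevel_integral_gt0 m : (0 <= m)%R -> m%:E < M ->
  0 < \int[L]_(x in D) K x (superlevel x m).
Proof.
move=> m0 mM; rewrite lt_neqAle integral_ge0 ?andbT //; apply/negP => /eqP I0.
have null : ae_eq L D (fun x => K x (superlevel x m)) (cst 0).
  apply/(ae_eq_integral_abs L mD (measurable_superlevel m)).
  by rewrite [RHS]I0; apply: eq_integral => x _; rewrite gee0_abs.
suff : M <= m%:E by rewrite leNgt mM.
apply: esssup_le; first by rewrite lee_fin.
apply: filterS null => x null Dx.
apply: (@esssup_le_superlevel0 _ _ _ (K x) (F x) (measurable_section Dx) m m0).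
exact: null Dx.
Qed.

Lemma superlevel_integral_lt m : \int[L]_(x in D) K x (superlevel x m) < +oo.
Proof.
apply: le_lt_trans LD_lt; rewrite -[leRHS]mul1e -integral_cst //.
apply: ae_ge0_le_integral => //; first exact: measurable_superlevel.
apply: filterS K_le1 => x K1 Dx; apply: le_trans (K1 Dx).
by apply: le_measure; rewrite ?inE //; exact: measurable_superlevel_section.
Qed.

Lemma Lq_ge (m : R) : (0 < m)%R -> m%:E < M ->
  exists2 c, (0 < c)%R & forall q, (0 < q)%R -> (m `^ q * c)%:E <= Lq q.
Proof.
move=> m0 mM; pose I := \int[L]_(x in D) K x (superlevel x m).
have Ifin : I \is a fin_num.
  by rewrite ge0_fin_numE ?superlevel_integral_lt // integral_ge0.
exists (fine I); first by rewrite -lte_fin fineK // superlevel_integral_gt0 // ltW.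
move=> q q0; rewrite EFinM fineK // -ge0_integralZl ?lee_fin ?powR_ge0 //; last first.
  exact: measurable_superlevel.
apply: ge0_le_integral => //.
- by move=> x _; rewrite mule_ge0 ?lee_fin ?powR_ge0.
- by apply: measurable_funeM; exact: measurable_superlevel.
- exact: measurable_Lq_integrand.
move=> x Dx.
apply: (@integral_powR_ge_superlevel _ _ _ (K x) (F x) (measurable_section Dx)).
- by move=> y; exact: F_ge0.
- exact: ltW.
- exact: ltW.
Qed.

Theorem Lq_cvg_esssup :
  (\int[L]_(x in D) \int[K x]_y (F x y `^ q)%:E) `^ (q^-1)%R @[q --> +oo%R] --> M.
Proof.
apply: poweR_inv_cvg; [exact: esssup_ge0|exact: Lq_ge0| |exact: Lq_ge].
move=> m Mm; exists (fine (L D) + 1)%R => [|q q0]; last exact: Lq_le.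
by rewrite ltr_wpDl // fine_ge0.
Qed.

End iterated_esssup.

Unset Implicit Arguments.

Theorem lemma3p4 (R : realType) (N d k : nat) (Omega : set 'rV[R]_N)
    (f : 'rV[R]_N -> 'rV[R]_d -> 'rV[R]_k -> R)
    (mu : 'rV[R]_N -> {measure set (Borel R k) -> \bar R})
    (v : 'rV[R]_N -> 'rV[R]_d) :
  open Omega ->
  (lebesgueN R N Omega < +oo)%E ->
  normal_integrand Omega f ->
  (forall x y xi, Omega x -> 0 <= f x y xi) ->
  young_measure Omega mu ->
  measurable_fun (Omega : set (Leb R N)) (v : Leb R N -> Borel R d) ->
  (poweR (\int[lebesgueN R N]_(x in (Omega : set (Leb R N)))
            \int[mu x]_xi ((f x (v x) xi) `^ q)%:E) q^-1)%E
    @[q --> +oo]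
  --> esssup (lebesgueN R N) Omega
        (fun x => esssup (mu x) [set: Borel R k] (fun xi => (f x (v x) xi)%:E)).
Proof.
move=> oOmega Omega_lt [mf _] f_ge0 [mu_compact mu_weak mu_le1] mv.
have mOmega := Leb_measurable_open oOmega.
have fv_ge0 x xi : Omega x -> 0 <= f x (v x) xi by exact: f_ge0.
have mfv := @measurable_fun_plug _ _ _ _ (Leb R N) (Borel R d) (Borel R k) R Omega
  (fun p => f p.1 p.2.1 p.2.2) v mOmega mf mv.
have mu_integral := measurable_young_integral mOmega mu_weak mu_compact.
exact: (@Lq_cvg_esssup _ _ (Leb R N) (Borel R k) R (lebesgueN R N) Omega mu
  (fun x xi => f x (v x) xi) mOmega Omega_lt fv_ge0 mfv mu_integral mu_le1).
Qed.
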